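(* A system $C=(1,c_2,c_3,c_4,c_5,2c_5-c_2)$ is canonical and its subsystem $(1,c_2,c_3,c_4,c_5)$ is noncanonical if and only if $C=(1,2,3,c_4,c_4+1,2c_4)$ and $c_4>4$.
   Context: A system is a tuple $C=(c_1,\dots,c_n)$ of integers with $1=c_1<c_2<\dots<c_n$; for $k\le n$, $(c_1,\dots,c_k)$ is a subsystem. For a positive integer $v$, $\mathrm{opt}_C(v)$ is the minimum of $\sum_i x_i$ over $x\in\mathbb{Z}_{\ge0}^n$ with $\sum_i c_ix_i=v$. The greedy representation of $v$ is produced by: for $i=n$ down to $1$, while $c_i\le$ remaining value, take a coin $c_i$. $\mathrm{grd}_C(v)$ is its number of coins. A positive integer $w$ is a counterexample if $\mathrm{opt}_C(w)<\mathrm{grd}_C(w)$; $C$ is canonical if it has none, noncanonical otherwise. *)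

From mathcomp Require Import all_boot.
Set Implicit Arguments. Unset Strict Implicit. Unset Printing Implicit Defensive.

Definition is_system (C : seq nat) : Prop :=
  head 0 C = 1 /\ sorted ltn C.

Definition is_repr (C : seq nat) (x : seq nat) (v : nat) : Prop :=
  size x = size C /\ \sum_(i < size C) nth 0 C i * nth 0 x i = v.

Definition is_opt (C : seq nat) (v k : nat) : Prop :=
  (exists x, is_repr C x v /\ sumn x = k) /\
  (forall x, is_repr C x v -> k <= sumn x).

(* Greedy: process coins from largest to smallest, taking as many copies of
   c_i as fit in the remaining value (for c_i >= 1 this is v %/ c_i copies). *)
Fixpoint grd_aux (cs : seq nat) (v : nat) : nat :=
  match cs with
  | [::] => 0
  | c :: cs' => v %/ c + grd_aux cs' (v %% c)
  end.
Definition grd (C : seq nat) (v : nat) : nat := grd_aux (rev C) v.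

Definition counterexample (C : seq nat) (w : nat) : Prop :=
  0 < w /\ exists k, is_opt C w k /\ k < grd C w.

Definition canonical (C : seq nat) : Prop := forall w, ~ counterexample C w.

From Stdlib Require Import Classical Wf_nat.
From mathcomp Require Import all_boot zify.

(* Let S = (1, a, b, c, d) be noncanonical and C = S + (2d - a) canonical.  Take the
   least counterexample w of S and a representation x of w with fewer coins than the
   greedy one.  Minimality forces x to avoid d and w < c_i + d for every coin c_i in x;
   canonicity of C forces w >= 2d - a and lets the greedy pay c + d and b + c with two
   coins.  Together these leave only x = c + c, a = 2, d = c + 1 and b = 3, and c = 4
   is excluded since greedily 8 = 5 + 3.
   Conversely, for C = (1, 2, 3, c, c + 1, 2c) the greedy count has a closed form, from
   which grd w <= 1 + grd (w - c_i) for every coin c_i <= w; by induction on the size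
   of a representation this makes C canonical, while S pays 2c = c + c but greedily
   needs c + 1 plus at least two small coins. *)

Set Implicit Arguments.
Unset Strict Implicit.
Unset Printing Implicit Defensive.

Lemma nth0_gt0_size s i : 0 < nth 0 s i -> i < size s.
Proof.
by move=> s_i_gt0; rewrite ltnNge; apply: contraTN s_i_gt0 => /(nth_default 0) ->.
Qed.

Lemma sumn_incr_nth s i : sumn (incr_nth s i) = (sumn s).+1.
Proof.
elim: s i => [|n s IH] [|i] //=; last by rewrite IH addnS.
by rewrite sumn_ncons mul0n.
Qed.

Lemma incr_nth_set_nth_pred s i :
  0 < nth 0 s i -> incr_nth (set_nth 0 s i (nth 0 s i).-1) i = s.
Proof.
move=> s_i_gt0; have i_lt := nth0_gt0_size s_i_gt0.
apply: (@eq_from_nth _ 0) => [|j _].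
  by rewrite size_incr_nth size_set_nth (maxn_idPr i_lt) i_lt.
by rewrite nth_incr_nth nth_set_nth /= eq_sym; case: eqVneq => [->|] /=; lia.
Qed.

Section Representations.
Variable C : seq nat.

Lemma coin_sum_incr_nth x i : i < size C ->
  \sum_(j < size C) nth 0 C j * nth 0 (incr_nth x i) j
  = \sum_(j < size C) nth 0 C j * nth 0 x j + nth 0 C i.
Proof.
move=> iC; under eq_bigr do rewrite nth_incr_nth mulnDr.
rewrite big_split addnC /= (bigD1 (Ordinal iC)) //= eqxx muln1 big1 ?addn0 // => j.
by rewrite -val_eqE eq_sym => /negbTE ->; rewrite muln0.
Qed.

Lemma is_repr_incr_nth x v i : i < size C ->
  is_repr C x v -> is_repr C (incr_nth x i) (v + nth 0 C i).
Proof.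
move=> iC [size_x <-]; split; last exact: coin_sum_incr_nth.
by rewrite size_incr_nth size_x iC.
Qed.

Lemma is_repr_decr x v i : 0 < nth 0 x i -> is_repr C x v ->
  nth 0 C i <= v /\ exists2 y, is_repr C y (v - nth 0 C i) & (sumn y).+1 = sumn x.
Proof.
move=> x_i_gt0 [size_x val_x].
have iC : i < size C by rewrite -size_x nth0_gt0_size.
set y := set_nth 0 x i (nth 0 x i).-1.
have x_eq : incr_nth y i = x by exact: incr_nth_set_nth_pred.
have size_y : size y = size C by rewrite size_set_nth size_x (maxn_idPr iC).
rewrite -x_eq coin_sum_incr_nth // in val_x.
split; first by rewrite -val_x leq_addl.
by exists y; [split; rewrite // -val_x addnK | rewrite -x_eq sumn_incr_nth].
Qed.
End Representations.

Lemma is_repr_nseq0 C : is_repr C (nseq (size C) 0) 0.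
Proof.
by split; rewrite ?size_nseq // big1 // => j _; rewrite nth_nseq if_same muln0.
Qed.

Lemma is_repr_used_coin C x v : is_repr C x v -> 0 < v ->
  exists2 i, i < size C & 0 < nth 0 x i.
Proof.
move=> [_ <-]; case: (boolP [exists j : 'I_(size C), 0 < nth 0 x j]).
  by case/existsP=> j x_j_gt0; exists j.
move/existsPn=> x0; rewrite big1 // => j _.
by move: (x0 j); rewrite lt0n negbK => /eqP ->; rewrite muln0.
Qed.

Lemma is_repr_rcons S e y u k :
  is_repr S y u -> is_repr (rcons S e) (rcons y k) (u + e * k).
Proof.
move=> [size_y <-]; split; first by rewrite !size_rcons size_y.
rewrite size_rcons big_ord_recr /= !nth_rcons size_y ltnn eqxx.
congr (_ + _); apply: eq_bigr => j _.
by rewrite !nth_rcons size_y ltn_ord.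
Qed.

Lemma grd0 C : grd C 0 = 0.
Proof. by rewrite /grd; elim: (rev C) => //= c cs; rewrite div0n mod0n. Qed.

Lemma grd_rcons S e v : grd (rcons S e) v = v %/ e + grd S (v %% e).
Proof. by rewrite /grd rev_rcons. Qed.

Lemma grd_rcons_divmod S e q r :
  r < e -> grd (rcons S e) (q * e + r) = q + grd S r.
Proof.
move=> lt_re; have e_gt0 : 0 < e by case: e lt_re.
by rewrite grd_rcons divnMDl // modnMDl divn_small // modn_small // addn0.
Qed.

Lemma grd_rcons_lt S e v : v < e -> grd (rcons S e) v = grd S v.
Proof. by move=> lt_ve; rewrite -[v]add0n -(mul0n e) grd_rcons_divmod. Qed.

Lemma grd_last_ge C v : 0 < last 0 C -> last 0 C <= v ->
  grd C v = (grd C (v - last 0 C)).+1.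
Proof.
case/lastP: C => [//|S e]; rewrite last_rcons => e_gt0 le_ev.
rewrite -{1}(subnK le_ev) !grd_rcons modnDr divnDr ?dvdnn // divnn e_gt0.
by rewrite addnAC addn1.
Qed.

Lemma greedy_repr C v : head 0 C = 1 ->
  exists2 y, is_repr C y v & sumn y = grd C v.
Proof.
elim/last_ind: C v => [//|S e IH] v.
case: S IH => [_ e1 | c S IH head1].
  have {e1}-> : e = 1 := e1.
  exists [:: v]; last by rewrite grd_rcons divn1 modn1 /= !addn0.
  by split; rewrite //= big_ord_recl big_ord0 mul1n addn0.
have [y repr_y sumn_y] := IH (v %% e) head1.
exists (rcons y (v %/ e)); last by rewrite sumn_rcons sumn_y grd_rcons addnC.
by rewrite {2}(divn_eq v e) addnC mulnC; apply: is_repr_rcons.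
Qed.

Lemma grd_le1_mem C v : head 0 C = 1 -> grd C v <= 1 -> v \in 0 :: C.
Proof.
move=> head1 grd_le1; have [y repr_y sumn_y] := greedy_repr v head1.
rewrite inE; case: (posnP v) => [-> //|v_gt0]; apply/orP; right.
have [i iC y_i_gt0] := is_repr_used_coin repr_y v_gt0.
have [le_ci [z repr_z sumn_z]] := is_repr_decr y_i_gt0 repr_y.
case: (posnP (v - nth 0 C i)) => [ci_v|rest_gt0].
  by rewrite (_ : v = nth 0 C i) ?mem_nth //; lia.
have [j jC z_j_gt0] := is_repr_used_coin repr_z rest_gt0.
have [_ [z' _ sumn_z']] := is_repr_decr z_j_gt0 repr_z.
lia.
Qed.

Lemma canonicalP C :
  canonical C <-> forall w x, is_repr C x w -> grd C w <= sumn x.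
Proof.
split=> [canC w x | grd_le w [_ [k [[[x [repr_x sumn_x]] _] lt_grd]]]]; last first.
  by move: (grd_le w x repr_x); rewrite sumn_x leqNgt lt_grd.
have [n] := ubnP (sumn x); elim: n => // n IH in w x *; rewrite ltnS => le_xn repr_x.
rewrite leqNgt; apply/negP => lt_x.
case: (classic (exists2 y, is_repr C y w & sumn y < sumn x)) => [[y repr_y lt_yx]|].
  by have := IH w y (leq_trans lt_yx le_xn) repr_y; lia.
move=> x_opt; apply: (canC w); split; first by case: posnP lt_x => [->|]; rewrite ?grd0.
exists (sumn x); split=> //; split=> [|y repr_y]; first by exists x.
by rewrite leqNgt; apply/negP => lt_yx; apply: x_opt; exists y.
Qed.

Lemma min_counterexample C : ~ canonical C ->
  exists w x, [/\ is_repr C x w, sumn x < grd C w &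
    forall v y, v < w -> is_repr C y v -> grd C v <= sumn y].
Proof.
move=> /canonicalP notC.
pose P w := exists2 x, is_repr C x w & sumn x < grd C w.
have exP : exists w, P w.
  apply: NNPP => noP; apply: notC => w x repr_x; rewrite leqNgt; apply/negP => lt_x.
  by apply: noP; exists w, x.
have [w [[[x repr_x lt_x] w_min] _]] :=
  dec_inh_nat_subset_has_unique_least_element P (fun w => classic (P w)) exP.
exists w, x; split=> // v y lt_vw repr_y; rewrite leqNgt; apply/negP => lt_y.
by move/leP: (w_min v (ex_intro2 _ _ y repr_y lt_y)); rewrite leqNgt lt_vw.
Qed.

Lemma canonical_of_grd_step C :
  (forall ci w, ci \in C -> ci <= w -> grd C w <= (grd C (w - ci)).+1) ->
  canonical C.
Proof.
move=> grd_step; apply/canonicalP => w x.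
have [n] := ubnP (sumn x); elim: n => // n IH in w x *; rewrite ltnS => le_xn repr_x.
case: (posnP w) => [->|w_gt0]; first by rewrite grd0.
have [i iC x_i_gt0] := is_repr_used_coin repr_x w_gt0.
have [le_ciw [y repr_y sumn_y]] := is_repr_decr x_i_gt0 repr_x.
apply: leq_trans (grd_step _ _ (mem_nth 0 iC) le_ciw) _.
by rewrite -sumn_y ltnS; apply: IH repr_y; rewrite sumn_y.
Qed.

Lemma canonical_grd_add_coins C ci cj : canonical C -> ci \in C -> cj \in C ->
  grd C (ci + cj) <= 2.
Proof.
move=> /canonicalP canC ciC cjC.
rewrite -[ci + cj]add0n addnA -(nth_index 0 ciC) -(nth_index 0 cjC).
rewrite -index_mem in ciC; rewrite -index_mem in cjC.
have repr2 := is_repr_incr_nth cjC (is_repr_incr_nth ciC (is_repr_nseq0 C)).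
apply: leq_trans (canC _ _ repr2) _.
by rewrite !sumn_incr_nth sumn_nseq.
Qed.

Lemma canonical_rcons_counterexample_ge S e w x : canonical (rcons S e) ->
  is_repr S x w -> sumn x < grd S w -> e <= w.
Proof.
move=> /canonicalP canC repr_x lt_x; rewrite leqNgt; apply/negP => lt_we.
have := canC _ _ (is_repr_rcons e 0 repr_x).
by rewrite muln0 addn0 grd_rcons_lt // sumn_rcons addn0 leqNgt lt_x.
Qed.

(* Writing w = q e + r, removing c_i either stays inside the last block of e
   or borrows one coin e, hence the two hypotheses on S. *)
Lemma grd_step_rcons S e : 0 < e -> {in S, forall ci, ci <= e} ->
  (forall ci r, ci \in S -> ci <= r < e -> grd S r <= (grd S (r - ci)).+1) ->
  (forall ci r, ci \in S -> r < ci -> grd S r <= grd S (e + r - ci)) ->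
  forall ci w, ci \in rcons S e -> ci <= w ->
  grd (rcons S e) w <= (grd (rcons S e) (w - ci)).+1.
Proof.
move=> e_gt0 le_e step_sub step_wrap ci w; rewrite mem_rcons inE.
case/predU1P=> [-> le_ew | ciS le_ciw].
  by rewrite (grd_last_ge (C := rcons S e)) last_rcons.
have w_eq := divn_eq w e; have lt_re := ltn_pmod w e_gt0.
move: (w %/ e) (w %% e) w_eq lt_re le_ciw => q r -> lt_re le_ciw.
case: (leqP ci r) => [le_cir | lt_rci].
  rewrite -addnBA // !grd_rcons_divmod ?(leq_ltn_trans (leq_subr _ _)) //.
  by rewrite -addnS leq_add2l step_sub // le_cir.
have le_cie := le_e ci ciS.
case: q le_ciw => [|q] le_ciw; first by move: le_ciw; rewrite mul0n add0n; lia.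
have lt_wrap : e + r - ci < e by lia.
rewrite (_ : q.+1 * e + r - ci = q * e + (e + r - ci)); last by rewrite mulSn; lia.
by rewrite !grd_rcons_divmod // addSn ltnS leq_add2l step_wrap.
Qed.

Lemma system_coin_gt0 C ci : is_system C -> ci \in C -> 0 < ci.
Proof.
case: C => [[]//|c C] [/= -> sortedC]; rewrite inE => /predU1P[-> //|ciC].
exact: ltnW (allP (order_path_min ltn_trans sortedC) ci ciC).
Qed.

Section MinimalCounterexample.
Variables (C x : seq nat) (w : nat).
Hypotheses (sysC : is_system C) (repr_x : is_repr C x w) (x_lt_grd : sumn x < grd C w).
Hypothesis grd_le_below : forall v y, v < w -> is_repr C y v -> grd C v <= sumn y.

Let coin_gt0 i : i < size C -> 0 < nth 0 C i.
Proof. by move=> iC; apply: system_coin_gt0 sysC (mem_nth 0 iC). Qed.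

Let last_gt0 : 0 < last 0 C.
Proof.
by case: C sysC => [[]//|c C'] sys; apply: system_coin_gt0 sys (mem_last c C').
Qed.

Lemma min_counterexample_drop i : i < size C -> 0 < nth 0 x i ->
  nth 0 C i <= w /\ grd C (w - nth 0 C i) < sumn x.
Proof.
move=> iC x_i_gt0; have [le_ciw [y repr_y <-]] := is_repr_decr x_i_gt0 repr_x.
split=> //; rewrite ltnS; apply: grd_le_below repr_y.
by rewrite ltn_subrL coin_gt0 //=; exact: leq_trans (coin_gt0 iC) le_ciw.
Qed.

Lemma min_counterexample_last_unused : nth 0 x (size C).-1 = 0.
Proof.
apply/eqP; rewrite -leqn0 leqNgt; apply/negP => x_last_gt0.
have iC : (size C).-1 < size C by rewrite prednK // lt0n size_eq0; case: C sysC => [[]|].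
have [le_dw lt_x] := min_counterexample_drop iC x_last_gt0.
rewrite nth_last in le_dw lt_x.
by move: x_lt_grd; rewrite (grd_last_ge last_gt0 le_dw) ltnS leqNgt lt_x.
Qed.

(* Otherwise the greedy on w - c_i starts with d; adding c_i to the greedy
   representation of w - c_i - d gives grd (w - d) <= grd (w - c_i) < sumn x. *)
Lemma min_counterexample_lt i : i < size C -> 0 < nth 0 x i ->
  w < nth 0 C i + last 0 C.
Proof.
move=> iC x_i_gt0; have [le_ciw lt_x] := min_counterexample_drop iC x_i_gt0.
set ci := nth 0 C i in le_ciw lt_x *; set d := last 0 C.
rewrite ltnNge; apply/negP => le_w; have le_dw : d <= w - ci by lia.
have [y repr_y sumn_y] := greedy_repr (w - ci - d) (proj1 sysC).
have repr_y' : is_repr C (incr_nth y i) (w - d).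
  by rewrite (_ : w - d = w - ci - d + ci); [exact: is_repr_incr_nth | lia].
have le_grd : grd C (w - d) <= (grd C (w - ci - d)).+1.
  by rewrite -sumn_y -(sumn_incr_nth y i); apply: grd_le_below repr_y'; lia.
move: lt_x x_lt_grd.
rewrite (grd_last_ge last_gt0 le_dw) (grd_last_ge last_gt0 (_ : d <= w)) -/d; lia.
Qed.
End MinimalCounterexample.

Section NoncanonicalPrefix.
Variables a b c d : nat.
Local Notation S := [:: 1; a; b; c; d].
Local Notation e := (2 * d - a).
Hypotheses (a_gt1 : 1 < a) (lt_ab : a < b) (lt_bc : b < c) (lt_cd : c < d).
Hypothesis lt_de : d < e.
Hypothesis canC : canonical (rcons S e).

Let sysS : is_system S.
Proof. by split; rewrite //= a_gt1 lt_ab lt_bc lt_cd. Qed.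

Lemma a_add_c_le_succ_d : a + c <= d.+1.
Proof.
case: (ltnP d (a + c)) => [lt_dac|]; last lia.
have cC : c \in rcons S e by rewrite !inE eqxx !orbT.
have dC : d \in rcons S e by rewrite !inE eqxx !orbT.
have := canonical_grd_add_coins canC cC dC.
rewrite grd_last_ge last_rcons; [|lia|lia].
by move/grd_le1_mem => /(_ erefl); rewrite !inE; lia.
Qed.

Lemma b_le3 : a = 2 -> d = c.+1 -> b <= 3.
Proof.
move=> a2 dc; have bC : b \in rcons S e by rewrite !inE eqxx !orbT.
have cC : c \in rcons S e by rewrite !inE eqxx !orbT.
have := canonical_grd_add_coins canC bC cC.
rewrite grd_rcons_lt; last lia.
rewrite grd_last_ge /=; [|lia|lia].
by move/grd_le1_mem => /(_ erefl); rewrite !inE; lia.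
Qed.

Lemma noncanonical_prefix_shape : ~ canonical S -> [/\ a = 2, b = 3, d = c.+1 & 4 < c].
Proof.
case/min_counterexample=> w [x [repr_x lt_x w_min]].
have le_ew := canonical_rcons_counterexample_ge canC repr_x lt_x.
have lt_used := min_counterexample_lt sysS repr_x lt_x w_min.
have x_last := min_counterexample_last_unused sysS repr_x lt_x w_min.
have le_d := a_add_c_le_succ_d.
case: x repr_x lt_x lt_used x_last => [|x0 [|x1 [|x2 [|x3 [|x4 [|? ?]]]]]] [//= _].
rewrite !big_ord_recl big_ord0 /bump /= => val_x lt_x lt_used x4_0.
have /= lt0 := lt_used 0 isT; have /= lt1 := lt_used 1 isT.
have /= lt2 := lt_used 2 isT; have /= lt3 := lt_used 3 isT.
clear lt_used.
(* w >= e >= d + c - 1, so x uses no coin below c. *)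
have [? [? ?]] : x0 = 0 /\ x1 = 0 /\ x2 = 0 by lia.
subst x0 x1 x2 x4.
case: x3 val_x lt_x lt3 => [|[|[|k]]] val_x lt_x lt3; [lia | lia | | nia].
have [a2 dc] : a = 2 /\ d = c.+1 by lia.
have b3 : b = 3 by have := b_le3 a2 dc; lia.
split=> //; rewrite ltnNge; apply/negP => le_c4.
(* For c = b + 1 = 4 the greedy writes 8 = 5 + 3. *)
have c4 : c = 4 by lia.
have w8 : w = 8 by lia.
by move: lt_x; rewrite w8 a2 dc b3 c4.
Qed.
End NoncanonicalPrefix.

Section System123c.
Variable c : nat.
Hypothesis c_gt4 : 4 < c.
Local Notation S := [:: 1; 2; 3; c; c.+1].

Lemma grd_123 v : grd [:: 1; 2; 3] v = (v + 2) %/ 3.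
Proof. by rewrite /grd /=; lia. Qed.

(* Below c the greedy uses only 1, 2, 3; from c on it first takes c + 1, or c at r = c. *)
Lemma grd_123c r : r < 2 * c ->
  grd S r = if r < c then (r + 2) %/ 3 else ((r - c).+1 %/ 3).+1.
Proof.
move=> lt_r; case: ltnP => [lt_rc | le_cr].
  by rewrite (grd_rcons_lt [:: 1; 2; 3; c]) ?(grd_rcons_lt [:: 1; 2; 3]) ?grd_123 // ltnW.
case: (eqVneq r c) => [->|ne_rc].
  by rewrite (grd_rcons_lt [:: 1; 2; 3; c]) // grd_last_ge //= ?subnn ?grd0 //; lia.
rewrite grd_last_ge /=; [|lia|lia].
by rewrite (grd_rcons_lt [:: 1; 2; 3; c]) ?(grd_rcons_lt [:: 1; 2; 3]) ?grd_123; lia.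
Qed.

Lemma grd_123c_sub ci r : ci \in S -> ci <= r < 2 * c -> grd S r <= (grd S (r - ci)).+1.
Proof.
move=> ciS /andP[le_cir lt_r]; rewrite !inE in ciS; rewrite !grd_123c; [|lia|lia].
by case: (ltnP r c); case: (ltnP (r - ci) c) => /=; lia.
Qed.

Lemma grd_123c_wrap ci r : ci \in S -> r < ci -> grd S r <= grd S (2 * c + r - ci).
Proof.
move=> ciS lt_rci; rewrite !inE in ciS; rewrite !grd_123c; [|lia|lia].
by case: (ltnP r c); case: (ltnP (2 * c + r - ci) c) => /=; lia.
Qed.

Lemma canonical_123c_2c : canonical (rcons S (2 * c)).
Proof.
apply: canonical_of_grd_step; apply: grd_step_rcons => [||ci r|ci r].
- lia.
- by move=> ci; rewrite !inE; lia.
- exact: grd_123c_sub.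
- exact: grd_123c_wrap.
Qed.

Lemma noncanonical_123c : ~ canonical S.
Proof.
move/canonicalP/(_ (2 * c) [:: 0; 0; 0; 2; 0]).
have repr : is_repr S [:: 0; 0; 0; 2; 0] (2 * c).
  by split; rewrite //= !big_ord_recl big_ord0 /bump /=; lia.
move/(_ repr); rewrite grd_last_ge /=; [|lia|lia].
by rewrite grd_123c ?ifT; lia.
Qed.
End System123c.

Theorem corollary4 (c2 c3 c4 c5 : nat) :
  is_system [:: 1; c2; c3; c4; c5; 2 * c5 - c2] ->
  (canonical [:: 1; c2; c3; c4; c5; 2 * c5 - c2] /\
   ~ canonical [:: 1; c2; c3; c4; c5])
  <->
  (c2 = 2 /\ c3 = 3 /\ c5 = c4 + 1 /\ 2 * c5 - c2 = 2 * c4 /\ 4 < c4).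
Proof.
case=> _ /=; case/andP=> lt12 /andP[lt23 /andP[lt34 /andP[lt45 /andP[lt56 _]]]].
split=> [[canC noncanS] | [-> [-> [-> [-> c4_gt4]]]]].
  have [-> -> -> c4_gt4] :=
    noncanonical_prefix_shape lt12 lt23 lt34 lt45 lt56 canC noncanS.
  by rewrite addn1; lia.
by rewrite addn1; split; [exact: canonical_123c_2c | exact: noncanonical_123c].
Qed.
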